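(* Let $\mathcal{H}$ be a Hilbert space of dimension $d$, let $\rho\in\mathcal{D}(\mathcal{H})$ be a known nominal state and $\alpha\in(0,1)$. Consider the one-sample quantum universal hypothesis testing problem: given $\sigma^{\otimes m}$ for an unknown $\sigma\in\mathcal{D}(\mathcal{H})$, test $H_0:\sigma=\rho$ against $H_1:\sigma\neq\rho$. Then there exist decision rules $M_m$ (depending only on $\rho$, $\alpha$, $m$, not on $\sigma$), using only independent measurements, such that for all sufficiently large $m$, $\alpha(M_m)\le\alpha$, and for every fixed $\sigma\neq\rho$ there is a constant $K$ (which may depend on $\rho,\sigma,\alpha,d$) such that for all sufficiently large $m$, $$\beta(M_m)\le\exp\!\left(-\frac{m\|\rho-\sigma\|_1^2}{86\,d^3}+K m^{1/2}\right).$$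
   Context: $\mathcal{D}(\mathcal{H})$ denotes the set of density operators on $\mathcal{H}$. A decision rule $M_m$ is a two-outcome POVM $\{E_0,E_1\}$ on $\mathcal{H}^{\otimes m}$ (outcome $0$: declare $H_0$; outcome $1$: declare $H_1$). ''Independent measurements'' means each of the $m$ copies is measured separately and the outcomes are classically processed. Type I error: $\alpha(M_m)=\mathrm{Tr}[\rho^{\otimes m}E_1]$; type II error (for the true state $\sigma$): $\beta(M_m)=\mathrm{Tr}[\sigma^{\otimes m}E_0]$. $\|X\|_1=\mathrm{Tr}\sqrt{X^\dagger X}$ is the trace norm. *)

From HB Require Import structures.
From mathcomp Require Import all_boot all_order all_algebra.
From mathcomp Require Import complex.
From mathcomp Require Import all_classical all_reals.
From mathcomp Require Import sequences exp.
Set Implicit Arguments. Unset Strict Implicit. Unset Printing Implicit Defensive.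
Import Order.TTheory GRing.Theory Num.Theory.
Local Open Scope ring_scope.

Section Quantum.
Variable R : realType.
Local Notation C := R[i].

Definition hadj (n m : nat) (A : 'M[C]_(n, m)) : 'M[C]_(m, n) :=
  (map_mx (fun z : C => z^*) A)^T.

(* positive semidefinite: <v, A v> >= 0 for every vector v (in C, 0 <= z means
   z is a nonnegative real), together with hermiticity. *)
Definition psd (d : nat) (A : 'M[C]_d) : Prop :=
  hadj A = A /\ forall v : 'cV[C]_d, 0 <= (hadj v *m A *m v) 0 0.

Definition density (d : nat) (A : 'M[C]_d) : Prop := psd A /\ \tr A = 1.

Definition psd_sqrt (d : nat) (A : 'M[C]_d) : 'M[C]_d :=
  xget 0 [set B : 'M[C]_d | psd B /\ B *m B = A].

Definition trace_norm (d : nat) (X : 'M[C]_d) : R :=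
  complex.Re (\tr (psd_sqrt (hadj X *m X))).

(* Operators on H^{(x)m}: H^{(x)m} has orthonormal basis indexed by
   {ffun 'I_m -> 'I_d}; an operator is given by its matrix entries. *)
Definition tidx (d m : nat) := {ffun 'I_m -> 'I_d}.
Definition top (d m : nat) := tidx d m -> tidx d m -> C.

Definition tens (d m : nat) (A : 'I_m -> 'M[C]_d) : top d m :=
  fun x y => \prod_(i < m) A i (x i) (y i).

Definition tpow (d : nat) (rho : 'M[C]_d) (m : nat) : top d m :=
  tens (fun _ => rho).
Arguments tpow {d} rho m : rename.

Definition top_id (d m : nat) : top d m := fun x y => (x == y)%:R.

Definition tr_mul (d m : nat) (A B : top d m) : C :=
  \sum_(x : tidx d m) \sum_(z : tidx d m) A x z * B z x.

Definition povm (d k : nat) (F : 'I_k -> 'M[C]_d) : Prop :=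
  (forall o, psd (F o)) /\ \sum_(o < k) F o = 1%:M.

(* A decision rule on H^{(x)m} using only independent measurements:
   copy i is measured with its own POVM F i (finitely many outcomes, padded
   to a common outcome set 'I_k), and the outcome string x is classically
   (possibly randomly) processed: H_1 is declared with probability g x. *)
Record indep_rule (d m : nat) := IndepRule {
  ir_k : nat;
  ir_F : 'I_m -> 'I_ir_k -> 'M[C]_d;
  ir_g : {ffun 'I_m -> 'I_ir_k} -> R;
  ir_povm : forall i, povm (ir_F i);
  ir_g01 : forall x, 0 <= ir_g x <= 1
}.
Arguments ir_k {d m} M : rename.
Arguments ir_F {d m} M _ _ : rename.
Arguments ir_g {d m} M _ : rename.

Definition rule_E1 (d m : nat) (M : indep_rule d m) : top d m :=
  fun x y => \sum_(o : {ffun 'I_m -> 'I_(ir_k M)})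
     (Complex (ir_g M o) 0 * tens (fun i => ir_F M i (o i)) x y).
Definition rule_E0 (d m : nat) (M : indep_rule d m) : top d m :=
  fun x y => top_id x y - rule_E1 M x y.

(* type I error Tr[rho^{(x)m} E_1] and type II error Tr[sigma^{(x)m} E_0]
   (both real numbers; we take the real part to land in R) *)
Definition type1_err (d m : nat) (rho : 'M[C]_d) (M : indep_rule d m) : R :=
  complex.Re (tr_mul (tpow rho m) (rule_E1 M)).
Definition type2_err (d m : nat) (sigma : 'M[C]_d) (M : indep_rule d m) : R :=
  complex.Re (tr_mul (tpow sigma m) (rule_E0 M)).

End Quantum.

From HB Require Import structures.
From mathcomp Require Import all_boot all_order all_algebra.
From mathcomp Require Import complex.
From mathcomp Require Import all_classical all_reals.
From mathcomp Require Import sequences exp.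
From mathcomp Require Import ring lra.
Import Order.TTheory GRing.Theory Num.Theory.
Set Implicit Arguments. Unset Strict Implicit. Unset Printing Implicit Defensive.
Local Open Scope ring_scope.

(* Every copy is measured with the same POVM {|v_t><v_t| / (8d)}, where v_t = e_j + i^w e_k
   for j, k < d and w < 4. Averaging over the four phases recovers the real and imaginary
   parts of every entry, so the outcome law p_X(t) = <v_t, X v_t> / (8d) of a hermitian X
   satisfies ||X||_2^2 <= 8 d^2 |p_X|^2, while ||X||_1^2 <= d ||X||_2^2. This reduces the
   problem to testing the outcome law q of sigma against p = p_rho: reject when the squared
   l2 distance between the empirical frequencies and p exceeds 1/(m alpha). The empirical
   frequencies have total variance at most 1/m, so Chebyshev bounds the type I error by
   alpha; a Chernoff bound for their projection on the direction (q - p)/|q - p| bounds the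
   type II error by exp(-(3/32) m (|q - p| - (m alpha)^(-1/2))^2). Since 8/86 < 3/32 and
   ||rho - sigma||_1^2 <= 8 d^3 |q - p|^2, this gives the claimed exponent. *)

Section SumDelta.
Variables (R : pzSemiRingType) (I : finType).

Lemma sum_delta_l (j : I) (f : I -> R) : \sum_i (i == j)%:R * f i = f j.
Proof.
by rewrite (bigD1 j) //= eqxx mul1r big1 ?addr0 // => i /negbTE ->; rewrite mul0r.
Qed.

Lemma sum_delta_r (j : I) (f : I -> R) : \sum_i f i * (i == j)%:R = f j.
Proof.
by rewrite (bigD1 j) //= eqxx mulr1 big1 ?addr0 // => i /negbTE ->; rewrite mulr0.
Qed.

End SumDelta.

Lemma sum_mul_sqr_le (R : realDomainType) (I : finType) (u v : I -> R) :
  (\sum_i u i * v i) ^+ 2 <= (\sum_i u i ^+ 2) * (\sum_i v i ^+ 2).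
Proof.
have lagrange : \sum_i \sum_j (u i * v j - u j * v i) ^+ 2 =
    2 * ((\sum_i u i ^+ 2) * (\sum_i v i ^+ 2) - (\sum_i u i * v i) ^+ 2).
  transitivity (\sum_i (u i ^+ 2 * \sum_j v j ^+ 2 + (\sum_j u j ^+ 2) * v i ^+ 2
                       - 2 * (u i * v i * \sum_j u j * v j))).
    apply: eq_bigr => i _.
    rewrite mulr_sumr mulr_suml [u i * v i * _]mulr_sumr mulr_sumr -big_split -sumrB /=.
    by apply: eq_bigr => j _; ring.
  rewrite sumrB big_split /= -mulr_suml -mulr_sumr -mulr_sumr -mulr_suml; ring.
have : 0 <= \sum_i \sum_j (u i * v j - u j * v i) ^+ 2.
  by do 2![apply: sumr_ge0 => ? _]; exact: sqr_ge0.
by rewrite lagrange pmulr_rge0 // subr_ge0.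
Qed.

Lemma weighted_sum_bound (R : realDomainType) (T : finType) (r u : T -> R) :
  (forall c, 0 <= r c) -> \sum_c r c = 1 -> (forall c, -1 <= u c <= 1) ->
  -1 <= \sum_c u c * r c <= 1.
Proof.
move=> r_ge0 r1 u_bound; rewrite -r1 -sumrN.
by apply/andP; split; apply: ler_sum => c _; have := u_bound c; have := r_ge0 c; nra.
Qed.

Section ProductExpectation.
Variables (R : numDomainType) (T : finType) (m : nat).
Implicit Types (q : T -> R) (h : {ffun 'I_m -> T} -> R).

Definition iidE q h := \sum_(o : {ffun 'I_m -> T}) (\prod_i q (o i)) * h o.

Lemma eq_iidE q h h' : (forall o, h o = h' o) -> iidE q h = iidE q h'.
Proof. by move=> eq_h; apply: eq_bigr => o _; rewrite eq_h. Qed.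

Lemma iidEZ q h c : iidE q (fun o => c * h o) = c * iidE q h.
Proof. by rewrite /iidE mulr_sumr; apply: eq_bigr => o _; rewrite mulrCA. Qed.

Lemma iidE_sum q (J : finType) (h : J -> {ffun 'I_m -> T} -> R) :
  iidE q (fun o => \sum_l h l o) = \sum_l iidE q (h l).
Proof. by rewrite /iidE exchange_big; apply: eq_bigr => o _; rewrite mulr_sumr. Qed.

Lemma ler_iidE q h h' :
  (forall c, 0 <= q c) -> (forall o, h o <= h' o) -> iidE q h <= iidE q h'.
Proof.
move=> q_ge0 le_h; apply: ler_sum => o _; apply: ler_wpM2l => //.
exact: prodr_ge0.
Qed.

Lemma iidE_prod q (f : 'I_m -> T -> R) :
  iidE q (fun o => \prod_i f i (o i)) = \prod_i \sum_c q c * f i c.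
Proof. by rewrite /iidE bigA_distr_bigA; apply: eq_bigr => o _; rewrite big_split. Qed.

Section Distribution.
Variable q : T -> R.
Hypothesis q1 : \sum_c q c = 1.

Lemma iidE_1B h : iidE q (fun o => 1 - h o) = 1 - iidE q h.
Proof.
have total : iidE q (fun _ => 1) = 1.
  rewrite (@eq_iidE _ _ (fun o => \prod_(i < m) 1)) => [|o]; last by rewrite big1.
  by rewrite (iidE_prod q (fun _ _ => 1)) big1 // => i _; under eq_bigr do rewrite mulr1.
by rewrite -[in RHS]total /iidE -sumrB; apply: eq_bigr => o _; rewrite mulrBr.
Qed.

Lemma iidE_coord (i : 'I_m) (f : T -> R) :
  iidE q (fun o => f (o i)) = \sum_c q c * f c.
Proof.
pose g l c := if l == i then f c else 1.
rewrite (@eq_iidE _ _ (fun o => \prod_l g l (o l))); last first.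
  by move=> o; rewrite -big_mkcond /= big_pred1_eq.
rewrite iidE_prod (bigD1 i) //= [X in _ * X]big1 ?mulr1; last first.
  by move=> l /negbTE neq_li; rewrite -q1; apply: eq_bigr => c _; rewrite /g neq_li mulr1.
by apply: eq_bigr => c _; rewrite /g eqxx.
Qed.

Lemma iidE_coord2 (i j : 'I_m) (f f' : T -> R) : i != j ->
  iidE q (fun o => f (o i) * f' (o j)) = (\sum_c q c * f c) * (\sum_c q c * f' c).
Proof.
move=> neq_ij.
pose g l c := (if l == i then f c else 1) * (if l == j then f' c else 1).
rewrite (@eq_iidE _ _ (fun o => \prod_l g l (o l))); last first.
  by move=> o; rewrite big_split /= -!big_mkcond /= !big_pred1_eq.
rewrite iidE_prod (bigD1 i) //= (bigD1 j) 1?eq_sym //= [X in _ * (_ * X)]big1 ?mulr1;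
  last first.
  move=> l /andP[/negbTE neq_li /negbTE neq_lj].
  by rewrite -q1; apply: eq_bigr => c _; rewrite /g neq_li neq_lj !mulr1.
congr (_ * _); apply: eq_bigr => c _; rewrite /g eqxx.
  by rewrite (negbTE neq_ij) mulr1.
by rewrite eq_sym (negbTE neq_ij) mul1r.
Qed.

End Distribution.
End ProductExpectation.

Section L2Test.
Variables (R : realFieldType) (T : finType) (m : nat).
Implicit Types (p : T -> R) (o : {ffun 'I_m -> T}).

Definition freq o (c : T) : R := (\sum_i (o i == c)%:R) / m%:R.

Definition dist2_freq p o := \sum_c (freq o c - p c) ^+ 2.

Definition l2_test p (a : R) o : R := if (m%:R * a)^-1 < dist2_freq p o then 1 else 0.

Lemma l2_test01 p a o : 0 <= l2_test p a o <= 1.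
Proof. by rewrite /l2_test; case: ifP; rewrite ?lexx ?ler01. Qed.

Lemma l2_test_reject p a o : (m%:R * a)^-1 < dist2_freq p o -> l2_test p a o = 1.
Proof. by rewrite /l2_test => ->. Qed.

Lemma l2_test_accept p a o : dist2_freq p o <= (m%:R * a)^-1 -> l2_test p a o = 0.
Proof. by rewrite /l2_test ltNge => ->. Qed.

Hypothesis m_gt0 : (0 < m)%N.

Let m_neq0 : m%:R != 0 :> R. Proof. by rewrite pnatr_eq0 -lt0n. Qed.

Lemma sum_freq o (f : T -> R) : \sum_i f (o i) = m%:R * \sum_c f c * freq o c.
Proof.
transitivity (\sum_c f c * \sum_i (o i == c)%:R).
  under [RHS]eq_bigr do rewrite mulr_sumr.
  rewrite exchange_big; apply: eq_bigr => i _.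
  by under eq_bigr do rewrite eq_sym; rewrite sum_delta_r.
by rewrite mulr_sumr; apply: eq_bigr => c _; rewrite /freq; field.
Qed.

Lemma iidE_freq_sqr p (c : T) : \sum_b p b = 1 ->
  iidE p (fun o => (freq o c - p c) ^+ 2) = (p c - p c ^+ 2) / m%:R.
Proof.
move=> p1; pose Z (b : T) := (b == c)%:R - p c.
have mean_Z : \sum_b p b * Z b = 0.
  under eq_bigr do rewrite mulrBr.
  by rewrite sumrB -mulr_suml p1 mul1r sum_delta_r subrr.
have var_Z : \sum_b p b * (Z b * Z b) = p c - p c ^+ 2.
  have e b : p b * (Z b * Z b) = p b * (b == c)%:R * (1 - 2 * p c) + p b * p c ^+ 2.
    by rewrite /Z; case: (b == c) => /=; rewrite ?mulr1n ?mulr0n; ring.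
  under eq_bigr do rewrite e.
  by rewrite big_split /= -mulr_suml sum_delta_r -mulr_suml p1; ring.
have freqE o : freq o c - p c = (\sum_i Z (o i)) / m%:R.
  by rewrite /freq /Z sumrB sumr_const card_ord; field.
rewrite (@eq_iidE _ _ _ _ _ (fun o => m%:R^-2 * \sum_i \sum_j Z (o i) * Z (o j))); last first.
  by move=> o; rewrite -big_distrlr /= -expr2 freqE expr_div_n mulrC.
rewrite iidEZ iidE_sum.
under eq_bigr => i _.
  rewrite iidE_sum (bigD1 i) //= big1 ?addr0 => [|j neq_ji]; last first.
    by rewrite iidE_coord2 1?eq_sym // mean_Z mul0r.
  rewrite (iidE_coord p1 i (fun b => Z b * Z b)) var_Z.
  over.
by rewrite sumr_const card_ord -mulr_natr; field.
Qed.

Lemma iidE_dist2_freq_le p :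
  (forall c, 0 <= p c) -> \sum_c p c = 1 -> iidE p (dist2_freq p) <= m%:R^-1.
Proof.
move=> p_ge0 p1; rewrite /dist2_freq iidE_sum.
under eq_bigr do rewrite iidE_freq_sqr //.
rewrite -mulr_suml ler_pdivrMr ?ltr0n // mulVf //.
rewrite -p1 ler_sum // => c _; rewrite gerBl; exact: sqr_ge0.
Qed.

Lemma l2_test_type1 p a : 0 < a -> (forall c, 0 <= p c) -> \sum_c p c = 1 ->
  iidE p (l2_test p a) <= a.
Proof.
move=> a_gt0 p_ge0 p1.
have ma_gt0 : 0 < m%:R * a by rewrite mulr_gt0 ?ltr0n.
have markov o : l2_test p a o <= (m%:R * a) * dist2_freq p o.
  rewrite /l2_test; case: ifP => [/ltW|_]; last first.
    by apply: mulr_ge0; [exact: ltW | apply: sumr_ge0 => c _; exact: sqr_ge0].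
  by rewrite -(ler_pM2l ma_gt0) mulfV ?gt_eqF.
apply: le_trans (ler_iidE p_ge0 markov) _; rewrite iidEZ.
apply: le_trans (ler_wpM2l (ltW ma_gt0) (iidE_dist2_freq_le p_ge0 p1)) _.
by rewrite mulrAC mulfV // mul1r.
Qed.

Lemma l2_accept_sum_le p (u : T -> R) (tau : R) o : 0 <= tau -> \sum_c u c ^+ 2 = 1 ->
  dist2_freq p o <= tau ^+ 2 -> \sum_i u (o i) <= m%:R * (\sum_c u c * p c + tau).
Proof.
move=> tau_ge0 u1 accept.
have := sum_mul_sqr_le u (fun c => freq o c - p c).
rewrite u1 mul1r -/(dist2_freq p o) => cs.
have dot_le : \sum_c u c * freq o c - \sum_c u c * p c <= tau.
  by rewrite -sumrB; under eq_bigr do rewrite -mulrBr; nra.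
by rewrite sum_freq ler_wpM2l ?ler0n //; lra.
Qed.

End L2Test.

Section Chernoff.
Variables (R : realType) (T : finType).

Lemma expR_le_quad (x : R) : x <= 1/2 -> expR x <= 1 + x + 2 * x ^+ 2.
Proof.
move=> x_le.
have : expR x * (1 - x) <= 1.
  rewrite -[X in _ <= X](expRxMexpNx_1 x) ler_wpM2l ?expR_ge0 //.
  exact: expR_ge1Dx.
have : 1 <= (1 - x) * (1 + x + 2 * x ^+ 2).
  have -> : (1 - x) * (1 + x + 2 * x ^+ 2) = 1 + x ^+ 2 * (1 - 2 * x) by ring.
  by rewrite lerDl mulr_ge0 ?sqr_ge0 //; lra.
have : 0 < 1 - x by lra.
nra.
Qed.

Lemma mgf_centered_le (q u : T -> R) (lam : R) :
  (forall c, 0 <= q c) -> \sum_c q c = 1 -> (forall c, -1 <= u c <= 1) -> 0 <= lam <= 1/4 ->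
  \sum_c q c * expR (lam * (\sum_b u b * q b - u c)) <= expR (2 * lam ^+ 2).
Proof.
move=> q_ge0 q1 u_bound /andP[lam_ge0 lam_le].
set mu := \sum_b u b * q b; pose Y c := mu - u c.
have /andP[mu_ge mu_le] : -1 <= mu <= 1 by exact: weighted_sum_bound.
have Y_mean : \sum_c q c * Y c = 0.
  under eq_bigr do rewrite mulrBr [q _ * u _]mulrC.
  by rewrite sumrB -mulr_suml q1 mul1r subrr.
have Y_var : \sum_c q c * Y c ^+ 2 <= 1.
  have e c : q c * Y c ^+ 2 = q c * u c ^+ 2 + (mu ^+ 2 * q c - 2 * mu * (u c * q c)).
    by rewrite /Y; ring.
  under eq_bigr do rewrite e.
  rewrite big_split /= sumrB -!mulr_sumr q1 -/mu mulr1.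
  have : \sum_c q c * u c ^+ 2 <= 1.
    rewrite -q1 ler_sum // => c _; rewrite ler_piMr //.
    by have := u_bound c; nra.
  by have := sqr_ge0 mu; lra.
have Y_small c : lam * Y c <= 1/2.
  have /andP[u_ge u_le] := u_bound c.
  rewrite /Y; nra.
apply: le_trans (expR_ge1Dx _).
apply: le_trans (_ : \sum_c q c * (1 + lam * Y c + 2 * (lam * Y c) ^+ 2) <= _).
  by apply: ler_sum => c _; rewrite ler_wpM2l ?q_ge0 ?expR_le_quad ?Y_small.
have e c : q c * (1 + lam * Y c + 2 * (lam * Y c) ^+ 2) =
    q c + lam * (q c * Y c) + 2 * lam ^+ 2 * (q c * Y c ^+ 2) by ring.
under eq_bigr do rewrite e.
rewrite !big_split /= -!mulr_sumr q1 Y_mean mulr0 addr0 lerD2l.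
by rewrite -[X in _ <= X]mulr1 ler_wpM2l // mulr_ge0 ?sqr_ge0.
Qed.

Variable m : nat.

Lemma iidE_chernoff_le (q u : T -> R) (h : {ffun 'I_m -> T} -> R) (lam t : R) :
  (forall c, 0 <= q c) -> \sum_c q c = 1 -> (forall c, -1 <= u c <= 1) -> 0 <= lam <= 1/4 ->
  (forall o, h o <= expR (lam * (\sum_i (\sum_b u b * q b - u (o i)) - t))) ->
  iidE q h <= expR (2 * lam ^+ 2 * m%:R - lam * t).
Proof.
move=> q_ge0 q1 u_bound lam_bound h_le; apply: le_trans (ler_iidE q_ge0 h_le) _.
set Y := fun c => \sum_b u b * q b - u c.
rewrite (@eq_iidE _ _ _ _ _ (fun o => expR (- (lam * t)) * \prod_i expR (lam * Y (o i)))).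
  rewrite iidEZ (iidE_prod q (fun _ c => expR (lam * Y c))).
  apply: le_trans (_ : expR (- (lam * t)) * \prod_(i < m) expR (2 * lam ^+ 2) <= _).
    rewrite ler_wpM2l ?expR_ge0 // ler_prod // => i _.
    by rewrite mgf_centered_le // andbT sumr_ge0 // => c _; rewrite mulr_ge0 ?expR_ge0.
  by rewrite -expR_sum -expRD sumr_const card_ord -mulr_natr ler_expR; lra.
by move=> o; rewrite -expR_sum -expRD -mulr_sumr; congr expR; ring.
Qed.

Hypothesis m_gt0 : (0 < m)%N.

Lemma l2_test_type2 (p q : T -> R) a : 0 < a ->
  (forall c, 0 <= p c) -> \sum_c p c = 1 -> (forall c, 0 <= q c) -> \sum_c q c = 1 ->
  let D := Num.sqrt (\sum_c (q c - p c) ^+ 2) in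
  let tau := Num.sqrt ((m%:R * a)^-1) in
  tau <= D ->
  iidE q (fun o : {ffun 'I_m -> T} => 1 - l2_test p a o) <=
    expR (- (3 / 32) * m%:R * (D - tau) ^+ 2).
Proof.
move=> a_gt0 p_ge0 p1 q_ge0 q1 D tau tau_le_D.
have ma_gt0 : 0 < m%:R * a by rewrite mulr_gt0 ?ltr0n.
have tau_gt0 : 0 < tau by rewrite sqrtr_gt0 invr_gt0.
have tau2 : tau ^+ 2 = (m%:R * a)^-1 by rewrite sqr_sqrtr // invr_ge0 ltW.
have D_gt0 : 0 < D := lt_le_trans tau_gt0 tau_le_D.
have D2 : D ^+ 2 = \sum_c (q c - p c) ^+ 2.
  by rewrite sqr_sqrtr // sumr_ge0 // => c _; exact: sqr_ge0.
pose u c := (q c - p c) / D.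
have u1 : \sum_c u c ^+ 2 = 1.
  under eq_bigr do rewrite expr_div_n.
  by rewrite -mulr_suml -D2 divff // gt_eqF // exprn_gt0.
have u_bound c : -1 <= u c <= 1.
  have : u c ^+ 2 <= 1.
    by rewrite -u1 (bigD1 c) //= lerDl sumr_ge0 // => b _; exact: sqr_ge0.
  by move=> u2; apply/andP; split; nra.
have mean_gap : \sum_c u c * q c - \sum_c u c * p c = D.
  rewrite -sumrB; under eq_bigr do rewrite -mulrBr.
  rewrite (eq_bigr (fun c => (q c - p c) ^+ 2 / D)) => [|c _]; last by rewrite mulrC mulrA -expr2.
  by rewrite -mulr_suml -D2 expr2 mulfK ?gt_eqF.
have D_le2 : D <= 2.
  have /andP[_ ?] := weighted_sum_bound q_ge0 q1 u_bound.
  have /andP[? _] := weighted_sum_bound p_ge0 p1 u_bound.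
  lra.
set s := D - tau; pose lam := s / 8.
have lam_bound : 0 <= lam <= 1/4 by apply/andP; split; rewrite /lam /s; lra.
apply: le_trans (iidE_chernoff_le (t := m%:R * s) q_ge0 q1 u_bound lam_bound _) _.
  move=> o; have [accept|reject] := leP (dist2_freq p o) ((m%:R * a)^-1); last first.
    by rewrite l2_test_reject // subrr expR_ge0.
  rewrite l2_test_accept // subr0 -[X in X <= _]expR0 ler_expR.
  rewrite -tau2 in accept.
  have sum_u_le := l2_accept_sum_le m_gt0 (ltW tau_gt0) u1 accept.
  rewrite sumrB sumr_const card_ord -mulr_natl.
  apply: mulr_ge0; first by rewrite /lam divr_ge0 // subr_ge0.
  suff : m%:R * (\sum_c u c * p c + tau) + m%:R * s = m%:R * (\sum_c u c * q c) by lra.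
  by rewrite -mulrDr; congr (_ * _); rewrite /s; lra.
by rewrite ler_expR /lam le_eqVlt; apply/orP; left; apply/eqP; field.
Qed.

End Chernoff.

Lemma chernoff_exponent_le (R : rcfType) (m a D2 T c : R) :
  0 < m -> 0 < a -> 0 <= D2 -> 0 < c -> T ^+ 2 <= 8 * c * D2 ->
  - (3 / 32) * m * (Num.sqrt D2 - Num.sqrt ((m * a)^-1)) ^+ 2 <=
  - (m * T ^+ 2) / (86 * c) + 3 / 16 * Num.sqrt D2 * Num.sqrt a^-1 * Num.sqrt m.
Proof.
move=> m_gt0 a_gt0 D2_ge0 c_gt0 T_le.
set D := Num.sqrt D2; set tau := Num.sqrt _.
have DD : D ^+ 2 = D2 by rewrite sqr_sqrtr.
have m_tau : m * tau = Num.sqrt a^-1 * Num.sqrt m.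
  have sqrt_m_gt0 : 0 < Num.sqrt m by rewrite sqrtr_gt0.
  have sqrt_a_gt0 : 0 < Num.sqrt a by rewrite sqrtr_gt0.
  rewrite /tau invfM sqrtrM ?invr_ge0 ?ltW // !sqrtrV ?ltW //.
  rewrite -{1}(sqr_sqrtr (ltW m_gt0)); field.
  by rewrite !gt_eqF.
have T_term : m * T ^+ 2 / (86 * c) <= 3 / 32 * (m * D2).
  rewrite ler_pdivrMr ?mulr_gt0 //.
  have := ler_wpM2l (ltW m_gt0) T_le.
  have := mulr_ge0 (mulr_ge0 (ltW m_gt0) (ltW c_gt0)) D2_ge0; nra.
have -> : - (3 / 32) * m * (D - tau) ^+ 2 =
    - (3 / 32) * (m * D2) + 3 / 16 * D * (m * tau) - 3 / 32 * (m * tau ^+ 2).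
  by rewrite -DD; field.
rewrite m_tau; have := mulr_ge0 (ltW m_gt0) (sqr_ge0 tau); rewrite mulNr; lra.
Qed.

Lemma sqrt_inv_le_archi (R : realType) (a D2 : R) (m : nat) : 0 < a -> 0 < D2 ->
  (Num.Def.archi_bound (a * D2)^-1 < m)%N -> Num.sqrt ((m%:R * a)^-1) <= Num.sqrt D2.
Proof.
move=> a_gt0 D2_gt0 m_gt; apply: ler_wsqrtr.
have aD2_gt0 : 0 < a * D2 by rewrite mulr_gt0.
have ma_gt0 : 0 < m%:R * a by rewrite mulr_gt0 // ltr0n (leq_ltn_trans _ m_gt).
have : (a * D2)^-1 < m%:R.
  apply: lt_le_trans (archi_boundP _) _; first by rewrite invr_ge0 ltW.
  by rewrite ler_nat ltnW.
rewrite -(ltr_pM2r aD2_gt0) mulVf ?gt_eqF // => lt1.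
by rewrite -(ler_pM2r ma_gt0) mulVf ?gt_eqF //; lra.
Qed.

Section Quantum.
Variable R : realType.
Local Notation C := R[i].
Local Open Scope complex_scope.
Local Open Scope ring_scope.

Lemma hadjE n m (A : 'M[C]_(n, m)) i j : hadj A i j = (A j i)^*.
Proof. by rewrite !mxE. Qed.

Lemma hadjK n m (A : 'M[C]_(n, m)) : hadj (hadj A) = A.
Proof. by apply/matrixP => i j; rewrite !hadjE conjCK. Qed.

Lemma hadjM n m p (A : 'M[C]_(n, m)) (B : 'M[C]_(m, p)) : hadj (A *m B) = hadj B *m hadj A.
Proof. by rewrite /hadj map_mxM trmx_mul. Qed.

Lemma hadjZ n m (c : C) (A : 'M[C]_(n, m)) : hadj (c *: A) = c^* *: hadj A.
Proof. by rewrite /hadj map_mxZ linearZ. Qed.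

Lemma hadjB n m (A B : 'M[C]_(n, m)) : hadj (A - B) = hadj A - hadj B.
Proof. by rewrite /hadj map_mxB linearB. Qed.

Lemma ger0_complexE (z : C) : 0 <= z -> z = (complex.Re z)%:C.
Proof. by move/ger0_Im => Im0; rewrite [LHS]complexE Im0 mulr0 addr0. Qed.

Lemma conj_realC (r : R) : (r%:C)^* = r%:C :> C.
Proof. by apply/eqP; rewrite eq_complex /= oppr0 !eqxx. Qed.

Section TensorTrace.
Variables (d m : nat) (s : 'M[C]_d).

Lemma tr_mul_tpow_tens (A : 'I_m -> 'M[C]_d) :
  tr_mul (tpow (m := m) s) (tens A) = \prod_i \tr (s *m A i).
Proof.
rewrite /tr_mul /tpow /tens.
transitivity (\sum_(x : tidx d m) \prod_i \sum_b s (x i) b * A i b (x i)).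
  apply: eq_bigr => x _; rewrite bigA_distr_bigA; apply: eq_bigr => z _.
  by rewrite big_split.
rewrite bigA_distr_bigA; apply: eq_bigr => i _.
by apply: eq_bigr => a _; rewrite mxE.
Qed.

Lemma tr_mul_tpow_id : tr_mul (tpow (m := m) s) (@top_id R d m) = \tr s ^+ m.
Proof.
rewrite /tr_mul /top_id -[m in RHS]card_ord -prodr_const /mxtrace bigA_distr_bigA.
by apply: eq_bigr => x _; rewrite sum_delta_r.
Qed.

Lemma tr_mul_rule_E1 (M : indep_rule R d m) :
  tr_mul (tpow (m := m) s) (rule_E1 M) =
  \sum_o (@ir_g _ _ _ M o)%:C * \prod_i \tr (s *m @ir_F _ _ _ M i (o i)).
Proof.
under [RHS]eq_bigr do rewrite -tr_mul_tpow_tens /tr_mul mulr_sumr.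
rewrite exchange_big /tr_mul; apply: eq_bigr => x _.
under [RHS]eq_bigr do rewrite mulr_sumr.
rewrite exchange_big; apply: eq_bigr => z _.
by rewrite /rule_E1 mulr_sumr; apply: eq_bigr => o _; rewrite mulrCA.
Qed.

Lemma tr_mul_rule_E0 (M : indep_rule R d m) :
  tr_mul (tpow (m := m) s) (rule_E0 M) = \tr s ^+ m - tr_mul (tpow (m := m) s) (rule_E1 M).
Proof.
rewrite -tr_mul_tpow_id /tr_mul -sumrB; apply: eq_bigr => x _.
by rewrite -sumrB; apply: eq_bigr => z _; rewrite mulrBr.
Qed.

End TensorTrace.

Definition root4 (w : 'I_4) : C := nth 0 [:: 1; 'i%C; -1; - 'i%C] w.

Lemma root4_normK w : (root4 w)^* * root4 w = 1.
Proof.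
case: w => [[|[|[|[|w]]]] lt_w4] //;
  by apply/eqP; rewrite eq_complex /=; apply/andP; split; apply/eqP; ring.
Qed.

Lemma sum_root4 : \sum_w root4 w = 0.
Proof.
rewrite !big_ord_recr big_ord0 /=.
by apply/eqP; rewrite eq_complex /=; apply/andP; split; apply/eqP; ring.
Qed.

Lemma sum_root4_mul (x y x' y' : C) :
  \sum_w (x + root4 w * y) * (x' + (root4 w)^* * y') = 4%:R * (x * x' + y * y').
Proof.
have e w : (x + root4 w * y) * (x' + (root4 w)^* * y') =
    x * x' + (root4 w)^* * (x * y') + root4 w * (y * x') + ((root4 w)^* * root4 w) * (y * y').
  by ring.
under eq_bigr do rewrite e root4_normK mul1r.
rewrite !big_split /= -!mulr_suml -rmorph_sum sum_root4 rmorph0 !mul0r !addr0.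
by rewrite !sumr_const !card_ord !mulrnAl -mulrnDl mul1r.
Qed.

Section Probe.
Variable d : nat.

Definition outcome := ('I_d * 'I_d * 'I_4)%type.

Definition probe (t : outcome) : 'cV[C]_d :=
  \col_a ((a == t.1.1)%:R + root4 t.2 * (a == t.1.2)%:R).

Definition probe_povm (t : outcome) : 'M[C]_d :=
  ((8 * d%:R)^-1)%:C *: (probe t *m hadj (probe t)).

Definition outcome_prob (X : 'M[C]_d) (t : outcome) : R :=
  (8 * d%:R)^-1 * complex.Re ((hadj (probe t) *m X *m probe t) 0 0).

Lemma probe_outerE (t : outcome) a b :
  (probe t *m hadj (probe t)) a b =
  ((a == t.1.1)%:R + root4 t.2 * (a == t.1.2)%:R) *
  ((b == t.1.1)%:R + (root4 t.2)^* * (b == t.1.2)%:R).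
Proof. by rewrite !mxE big_ord1 hadjE !mxE rmorphD rmorphM !rmorph_nat. Qed.

Lemma sum_outcome (V : nmodType) (G : outcome -> V) :
  \sum_t G t = \sum_j \sum_k \sum_w G (j, k, w).
Proof. by rewrite pair_bigA /= pair_bigA /=; apply: eq_bigr => -[[j k] w]. Qed.

Lemma sum_probe_outer : \sum_t probe t *m hadj (probe t) = (8 * d%:R) *: 1%:M.
Proof.
apply/matrixP => a b; rewrite summxE !mxE sum_outcome.
under eq_bigr => j _ do under eq_bigr => k _ do
  rewrite (eq_bigr _ (fun w _ => probe_outerE (j, k, w) a b)) /= sum_root4_mul.
have sum_delta2 : \sum_j ((a == j)%:R * (b == j)%:R : C) = (a == b)%:R.
  by under eq_bigr do rewrite eq_sym; rewrite sum_delta_l eq_sym.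
rewrite (eq_bigr (fun j => 4%:R * ((a == j)%:R * (b == j)%:R) * d%:R + 4%:R * (a == b)%:R)).
  rewrite big_split /= -mulr_suml -mulr_sumr sum_delta2 sumr_const card_ord -[_ *+ d]mulr_natr.
  ring.
move=> j _; under eq_bigr do rewrite mulrDr.
by rewrite big_split /= sumr_const card_ord -mulr_sumr sum_delta2 -[_ *+ d]mulr_natr.
Qed.

Lemma sum_probe_povm : \sum_t probe_povm t = 1%:M.
Proof.
(* For d = 0 the normalisation (8d)^-1 is the junk value 0, but all matrices are equal. *)
have [d0|d_gt0] := posnP d.
  by apply/matrixP => -[i lt_id]; exfalso; move: lt_id; rewrite d0.
rewrite -scaler_sumr sum_probe_outer.
have -> : (8 * d%:R : C) = (8 * d%:R)%:C by rewrite rmorphM !rmorph_nat.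
rewrite scalerA -rmorphM mulVf ?scale1r //.
by rewrite mulf_neq0 // pnatr_eq0 -lt0n.
Qed.

Lemma probe_povm_psd t : psd (probe_povm t).
Proof.
split; first by rewrite /probe_povm hadjZ conj_realC hadjM hadjK.
move=> v; rewrite /probe_povm -scalemxAr -scalemxAl mxE.
rewrite mulr_ge0 ?ler0c ?invr_ge0 ?mulr_ge0 ?ler0n //.
rewrite mulmxA -(mulmxA (hadj v *m probe t)) mxE big_ord1.
have -> : hadj (probe t) *m v = hadj (hadj v *m probe t) by rewrite hadjM hadjK.
by rewrite hadjE mul_conjC_ge0.
Qed.

Lemma tr_mul_probe_povm (X : 'M[C]_d) t :
  \tr (X *m probe_povm t) = ((8 * d%:R)^-1)%:C * (hadj (probe t) *m X *m probe t) 0 0.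
Proof.
by rewrite /probe_povm -scalemxAr mxtraceZ mulmxA mxtrace_mulC mulmxA /mxtrace big_ord1.
Qed.

Lemma tr_mul_probe_povm_psd s t : psd s -> \tr (s *m probe_povm t) = (outcome_prob s t)%:C.
Proof.
by move=> [_ s_ge0]; rewrite tr_mul_probe_povm [X in _ * X]ger0_complexE // -rmorphM.
Qed.

Lemma outcome_prob_ge0 s t : psd s -> 0 <= outcome_prob s t.
Proof.
move=> [_ s_ge0]; rewrite mulr_ge0 ?invr_ge0 ?mulr_ge0 ?ler0n //.
by rewrite -ler0c -ger0_complexE ?s_ge0.
Qed.

Lemma outcome_probB (A B : 'M[C]_d) t :
  outcome_prob (A - B) t = outcome_prob A t - outcome_prob B t.
Proof.
rewrite /outcome_prob mulmxBr mulmxBl -mulrBr -raddfB /=.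
by congr (_ * complex.Re _); rewrite !mxE.
Qed.

Lemma sum_outcome_prob s : density s -> \sum_t outcome_prob s t = 1.
Proof.
move=> [s_psd tr_s].
have -> : 1 = complex.Re (\tr s) by rewrite tr_s.
rewrite -[in RHS](mulmx1 s) -sum_probe_povm mulmx_sumr [\tr _]linear_sum raddf_sum /=.
by apply: eq_bigr => t _; rewrite tr_mul_probe_povm_psd.
Qed.

Definition frob_norm2 (X : 'M[C]_d) : R :=
  \sum_a \sum_b (complex.Re (X a b) ^+ 2 + complex.Im (X a b) ^+ 2).

Lemma frob_norm2_ge0 X : 0 <= frob_norm2 X.
Proof. by do 2![apply: sumr_ge0 => ? _]; rewrite addr_ge0 ?sqr_ge0. Qed.

Lemma frob_norm2_eq0 X : frob_norm2 X = 0 -> X = 0.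
Proof.
have sqr2_ge0 (z : C) : 0 <= complex.Re z ^+ 2 + complex.Im z ^+ 2.
  by rewrite addr_ge0 ?sqr_ge0.
move/eqP; rewrite psumr_eq0 => [/allP frob0|a _]; last exact: sumr_ge0.
apply/matrixP => a b; have /= := frob0 a (mem_index_enum a).
rewrite psumr_eq0 // => /allP/(_ b (mem_index_enum b)) /=.
rewrite paddr_eq0 ?sqr_ge0 // !sqrf_eq0 mxE => /andP[/eqP Re0 /eqP Im0].
by apply/eqP; rewrite eq_complex Re0 Im0 !eqxx.
Qed.

Lemma Re_tr_hadjM X : complex.Re (\tr (hadj X *m X)) = frob_norm2 X.
Proof.
rewrite /mxtrace raddf_sum /frob_norm2 exchange_big /=; apply: eq_bigr => a _.
rewrite mxE raddf_sum; apply: eq_bigr => c _.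
by rewrite hadjE; case: (X c a) => x y /=; ring.
Qed.

Lemma quad_probe X j k w :
  (hadj (probe (j, k, w)) *m X *m probe (j, k, w)) 0 0 =
  X j j + root4 w * X j k + (root4 w)^* * X k j + X k k.
Proof.
have row b : (hadj (probe (j, k, w)) *m X) 0 b = X j b + (root4 w)^* * X k b.
  rewrite mxE -(sum_delta_l j (X^~ b)) -(sum_delta_l k (fun a => (root4 w)^* * X a b)).
  rewrite -big_split; apply: eq_bigr => a _.
  by rewrite hadjE !mxE rmorphD rmorphM !rmorph_nat /=; ring.
have e b : (X j b + (root4 w)^* * X k b) * ((b == j)%:R + root4 w * (b == k)%:R) =
    X j b * (b == j)%:R + root4 w * X j b * (b == k)%:R
    + (root4 w)^* * X k b * (b == j)%:R + (root4 w)^* * root4 w * X k b * (b == k)%:R.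
  by ring.
rewrite mxE; under eq_bigr do rewrite row !mxE /= e.
by rewrite !big_split /= !sum_delta_r root4_normK mul1r.
Qed.

Lemma Re_quad_probe X j k w : hadj X = X ->
  complex.Re ((hadj (probe (j, k, w)) *m X *m probe (j, k, w)) 0 0) =
  complex.Re (X j j) + complex.Re (X k k) + 2 * complex.Re (root4 w * X j k).
Proof.
move=> X_herm; have ReJ (z : C) : complex.Re z^* = complex.Re z by case: z.
rewrite quad_probe; have -> : X k j = (X j k)^* by rewrite -[in LHS]X_herm hadjE.
rewrite -rmorphM.
by rewrite !raddfD /= ReJ; ring.
Qed.

Lemma sum_sqr_root4_ge (r : R) (z : C) :
  8 * (complex.Re z ^+ 2 + complex.Im z ^+ 2) <=
  \sum_w (r + 2 * complex.Re (root4 w * z)) ^+ 2.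
Proof.
rewrite !big_ord_recr big_ord0 /=; case: z => x y /=.
by have := sqr_ge0 r; nra.
Qed.

Lemma frob_norm2_le_quad X : hadj X = X ->
  8 * frob_norm2 X <= \sum_t complex.Re ((hadj (probe t) *m X *m probe t) 0 0) ^+ 2.
Proof.
move=> X_herm; rewrite sum_outcome /frob_norm2 mulr_sumr; apply: ler_sum => j _.
rewrite mulr_sumr; apply: ler_sum => k _.
under eq_bigr do rewrite Re_quad_probe //.
exact: sum_sqr_root4_ge.
Qed.

Lemma frob_norm2_le_outcome_prob X : hadj X = X ->
  frob_norm2 X <= 8 * d%:R ^+ 2 * \sum_t outcome_prob X t ^+ 2.
Proof.
move=> X_herm; have [d0|d_gt0] := posnP d.
  rewrite /frob_norm2 big1 ?mulr_ge0 ?sumr_ge0 // => [t _|[a lt_ad] _]; first exact: sqr_ge0.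
  by exfalso; move: lt_ad; rewrite d0.
have d_neq0 : d%:R != 0 :> R by rewrite pnatr_eq0 -lt0n.
under eq_bigr do rewrite exprMn.
rewrite -mulr_sumr mulrA (_ : _ * _ ^+ 2 = 8^-1); last by field.
by have := frob_norm2_le_quad X_herm; lra.
Qed.

Lemma trace_norm_sqr_le X : trace_norm X ^+ 2 <= d%:R * frob_norm2 X.
Proof.
(* Without a PSD square root, [psd_sqrt] defaults to 0 and the bound is trivial. *)
rewrite /trace_norm /psd_sqrt; set P := (X in xget _ X).
have [ex|no_sqrt] := pselect (exists B, P B); last first.
  rewrite xgetPN => [|B PB]; last by apply: no_sqrt; exists B.
  by rewrite linear0 expr0n mulr_ge0 ?ler0n ?frob_norm2_ge0.
have [[B_herm _] BB] := xgetPex 0 ex; set B := xget 0 P in B_herm BB *.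
pose b a := complex.Re (B a a).
have cs := sum_mul_sqr_le (fun _ : 'I_d => 1 : R) b.
rewrite (eq_bigr b) in cs; last by move=> a _; rewrite mul1r.
rewrite [X in _ <= X * _](eq_bigr (fun _ => 1)) in cs; last by move=> a _; rewrite expr1n.
rewrite sumr_const card_ord in cs.
rewrite raddf_sum; apply: le_trans cs _; rewrite ler_wpM2l ?ler0n //.
rewrite -Re_tr_hadjM -BB -{1}B_herm Re_tr_hadjM; apply: ler_sum => a _.
rewrite (bigD1 a) //= -addrA ler_wpDr //.
  by rewrite addr_ge0 ?sqr_ge0 // sumr_ge0 // => c _; rewrite addr_ge0 ?sqr_ge0.
Qed.

End Probe.

Section ProbeRule.
Variable d : nat.
Local Notation K := #|{: outcome d}|.

Lemma sum_enum_outcome (V : nmodType) (f : outcome d -> V) :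
  \sum_(c < K) f (enum_val c) = \sum_t f t.
Proof. by rewrite -big_enum_val /=; apply: eq_bigl => t. Qed.

Definition outcome_law (s : 'M[C]_d) (c : 'I_K) : R := outcome_prob s (enum_val c).

Lemma outcome_law_ge0 s c : psd s -> 0 <= outcome_law s c.
Proof. exact: outcome_prob_ge0. Qed.

Lemma sum_outcome_law s : density s -> \sum_c outcome_law s c = 1.
Proof. by move=> s_dens; rewrite (sum_enum_outcome (outcome_prob s)) sum_outcome_prob. Qed.

Lemma frob_norm2_le_outcome_law rho sigma : psd rho -> psd sigma ->
  frob_norm2 (rho - sigma) <=
  8 * d%:R ^+ 2 * \sum_c (outcome_law sigma c - outcome_law rho c) ^+ 2.
Proof.
move=> [rho_herm _] [sigma_herm _].
rewrite (eq_bigr (fun c => outcome_prob (rho - sigma) (enum_val c) ^+ 2)) => [|c _].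
  by rewrite (sum_enum_outcome (fun t => outcome_prob (rho - sigma) t ^+ 2))
    frob_norm2_le_outcome_prob // hadjB rho_herm sigma_herm.
by rewrite outcome_probB -sqrrN opprB.
Qed.

Lemma outcome_law_dist_gt0 rho sigma : psd rho -> psd sigma -> sigma <> rho ->
  0 < \sum_c (outcome_law sigma c - outcome_law rho c) ^+ 2.
Proof.
move=> rho_psd sigma_psd sigma_neq.
have frob_gt0 : 0 < frob_norm2 (rho - sigma).
  rewrite lt_def frob_norm2_ge0 andbT; apply/eqP => /frob_norm2_eq0/eqP.
  by rewrite subr_eq0 => /eqP/esym.
rewrite lt_def sumr_ge0 ?andbT => [|c _]; last exact: sqr_ge0.
apply/eqP => dist0; have := lt_le_trans frob_gt0 (frob_norm2_le_outcome_law rho_psd sigma_psd).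
by rewrite dist0 mulr0 ltxx.
Qed.

Lemma trace_norm_sqr_le_outcome_law rho sigma : psd rho -> psd sigma ->
  trace_norm (rho - sigma) ^+ 2 <=
  8 * d%:R ^+ 3 * \sum_c (outcome_law sigma c - outcome_law rho c) ^+ 2.
Proof.
move=> rho_psd sigma_psd; apply: le_trans (trace_norm_sqr_le _) _.
set S := \sum_c _.
have -> : 8 * d%:R ^+ 3 * S = d%:R * (8 * d%:R ^+ 2 * S) by ring.
by rewrite ler_wpM2l ?ler0n ?frob_norm2_le_outcome_law.
Qed.

Lemma density_dim_gt0 (s : 'M[C]_d) : density s -> (0 < d)%N.
Proof.
by case: d s => // s [_]; rewrite /mxtrace big_ord0 => /esym/eqP; rewrite oner_eq0.
Qed.

Lemma probe_povm_enum : povm (fun c : 'I_K => probe_povm (enum_val c)).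
Proof.
split=> [c|]; first exact: probe_povm_psd.
by rewrite (sum_enum_outcome (@probe_povm d)) sum_probe_povm.
Qed.

Definition probe_rule m (g : {ffun 'I_m -> 'I_K} -> R) (g01 : forall o, 0 <= g o <= 1) :
    indep_rule R d m :=
  @IndepRule R d m K (fun _ c => probe_povm (enum_val c)) g (fun _ => probe_povm_enum) g01.

Lemma type1_err_probe_rule m g g01 s : psd s ->
  type1_err s (@probe_rule m g g01) = iidE (outcome_law s) g.
Proof.
move=> s_psd; rewrite /type1_err tr_mul_rule_E1 raddf_sum; apply: eq_bigr => o _ /=.
under eq_bigr do rewrite tr_mul_probe_povm_psd //.
by rewrite -(rmorph_prod (real_complex R)) -rmorphM mulrC.
Qed.

Lemma type2_err_probe_rule m g g01 s : density s ->
  type2_err s (@probe_rule m g g01) = iidE (outcome_law s) (fun o => 1 - g o).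
Proof.
move=> [s_psd tr_s].
rewrite iidE_1B ?sum_outcome_law // -type1_err_probe_rule //.
by rewrite /type2_err tr_mul_rule_E0 tr_s expr1n raddfB.
Qed.

End ProbeRule.
End Quantum.

Theorem theorem4 (R : realType) (d : nat) (rho : 'M[R[i]]_d) (alpha : R) :
  density rho -> 0 < alpha < 1 ->
  exists M : forall m : nat, indep_rule R d m,
    (exists m0 : nat, forall m : nat, (m0 <= m)%N -> type1_err rho (M m) <= alpha)
    /\
    (forall sigma : 'M[R[i]]_d, density sigma -> sigma <> rho ->
       exists K : R, exists m0 : nat, forall m : nat, (m0 <= m)%N ->
         type2_err sigma (M m) <=
           expR (- (m%:R * trace_norm (rho - sigma) ^+ 2) / (86 * d%:R ^+ 3)
                 + K * Num.sqrt (m%:R))).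
Proof.
move=> rho_dens /andP[alpha_gt0 _]; have [rho_psd _] := rho_dens.
pose p := outcome_law rho.
have p_ge0 c : 0 <= p c by exact: outcome_law_ge0.
have p1 : \sum_c p c = 1 by exact: sum_outcome_law.
exists (fun m => probe_rule (@l2_test01 _ _ m p alpha)); split.
  by exists 1%N => m m_gt0; rewrite type1_err_probe_rule //; apply: l2_test_type1.
move=> sigma sigma_dens sigma_neq; have [sigma_psd _] := sigma_dens.
pose q := outcome_law sigma.
have q_ge0 c : 0 <= q c by exact: outcome_law_ge0.
have q1 : \sum_c q c = 1 by exact: sum_outcome_law.
have D2_gt0 := outcome_law_dist_gt0 rho_psd sigma_psd sigma_neq.
set D2 := \sum_c _ in D2_gt0.
exists (3 / 16 * Num.sqrt D2 * Num.sqrt alpha^-1), (Num.Def.archi_bound (alpha * D2)^-1).+1.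
move=> m m_gt; have m_gt0 : (0 < m)%N by apply: leq_trans m_gt.
rewrite type2_err_probe_rule //.
apply: le_trans (l2_test_type2 m_gt0 alpha_gt0 p_ge0 p1 q_ge0 q1 _) _.
  exact: sqrt_inv_le_archi.
rewrite ler_expR; apply: chernoff_exponent_le.
- by rewrite ltr0n.
- exact: alpha_gt0.
- exact: ltW.
- by rewrite exprn_gt0 // ltr0n (density_dim_gt0 rho_dens).
- exact: trace_norm_sqr_le_outcome_law.
Qed.
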